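(* Let $m\in\mathbb{N}_+$, $\alpha=(\alpha_1,\dots,\alpha_m)\in(0,1)^m$ and $0<K<\infty$. Let $q\in\mathbb{N}_+$ and $l\in[1,\infty)$ with $q\le l$, and suppose there are $(p_1,\dots,p_m)\in\{1,\dots,q-1\}^m$ such that $|q\alpha_i-p_i|<K/l$ for all $i$, and $\mathbb{Z}/q\mathbb{Z}$ admits an isomorphism $\mathbb{Z}/q\mathbb{Z}\cong\bigoplus_{i=1}^m\mathbb{Z}/l_i\mathbb{Z}$ under which the image of $p_i$ is a generator of the summand $\mathbb{Z}/l_i\mathbb{Z}$, for each $i$. Then, for the action $\mathbb{Z}^m\curvearrowright_\alpha\mathbb{T}^1$, the level $(ql\,\mathbb{T}^1,d_{\mathbb{Z}^m})$ of the warped cone is quasi-isometric to $(\mathbb{T}^1,ld)\times\prod_{i=1}^m(\mathbb{T}^1,l_id)$ (with the $\ell_1$-product metric), with quasi-isometry constants depending only on $m$ and $K$.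
   Context: $\mathbb{T}^1=\mathbb{R}/\mathbb{Z}$ with standard metric $d$ of circumference $1$; $(\mathbb{T}^1,cd)$ is this circle with metric scaled by $c$. The action $\mathbb{Z}^m\curvearrowright_\alpha\mathbb{T}^1$ is $(n_1,\dots,n_m).z=z+\sum_in_i\alpha_i$, with generating set $\{\pm e_1,\dots,\pm e_m\}$ of $\mathbb{Z}^m$. For $t>0$, $d_{\mathbb{Z}^m}$ on $t\mathbb{T}^1$ is the largest metric with $d_{\mathbb{Z}^m}(z,z')\le td(z,z')$ and $d_{\mathbb{Z}^m}(z,z\pm\alpha_j)\le1$ for all $j$. A $(C,A)$-quasi-isometry $f:X\to Y$ satisfies $C^{-1}d(x,x')-A\le d(f(x),f(x'))\le Cd(x,x')+A$ and the $A$-neighbourhood of $f(X)$ is $Y$. *)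

From Stdlib Require Import Reals ZArith.
From Coquelicot Require Import Coquelicot.
From mathcomp Require Import ssreflect ssrbool ssrnat fintype bigop.

Open Scope R_scope.

(* The circle T^1 = R/Z, represented by the representatives in [0,1). *)
Definition circle := { x : R | 0 <= x < 1 }.

Definition cdist (z z' : circle) : R :=
  Rmin (Rabs (proj1_sig z - proj1_sig z')) (1 - Rabs (proj1_sig z - proj1_sig z')).

Lemma frac_part_in01 (r : R) : 0 <= frac_part r < 1.
Proof. destruct (base_fp r) as [H1 H2]; split; [apply Rge_le|]; assumption. Qed.

Definition cadd (z : circle) (a : R) : circle :=
  exist _ (frac_part (proj1_sig z + a)) (frac_part_in01 _).

Definition is_metric (delta : circle -> circle -> R) : Prop :=
  (forall z z', 0 <= delta z z') /\
  (forall z z', delta z z' = 0 <-> z = z') /\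
  (forall z z', delta z z' = delta z' z) /\
  (forall z z' z'', delta z z'' <= delta z z' + delta z' z'').

(* delta is admissible for the warped metric d_{Z^m} on t T^1 for the
   action Z^m acting via alpha, generating set {+-e_1,...,+-e_m}. *)
Definition warp_admissible (m : nat) (alpha : 'I_m -> R) (t : R)
    (delta : circle -> circle -> R) : Prop :=
  is_metric delta /\
  (forall z z', delta z z' <= t * cdist z z') /\
  (forall z (j : 'I_m), delta z (cadd z (alpha j)) <= 1 /\
                        delta z (cadd z (- alpha j)) <= 1).

(* The warped metric d_{Z^m} on t T^1: the largest admissible metric,
   i.e. the pointwise supremum of all admissible metrics. *)
Definition warped_dist (m : nat) (alpha : 'I_m -> R) (t : R)
    (z z' : circle) : R :=
  real (Lub_Rbar (fun r => exists delta,
          warp_admissible m alpha t delta /\ r = delta z z')).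

Definition prod_dist (m : nat) (l : R) (li : 'I_m -> nat)
    (x y : circle * ('I_m -> circle)) : R :=
  l * cdist (fst x) (fst y) +
  \big[Rplus/0]_(i < m) (INR (li i) * cdist (snd x i) (snd y i)).

Definition quasi_isometry {X Y : Type} (dX : X -> X -> R) (dY : Y -> Y -> R)
    (C A : R) (f : X -> Y) : Prop :=
  (forall x x', / C * dX x x' - A <= dY (f x) (f x') /\
                dY (f x) (f x') <= C * dX x x' + A) /\
  (forall y, exists x, dY (f x) y <= A).

Definition zcong (n a b : Z) : Prop := Z.modulo a n = Z.modulo b n.

(* Elements are represented by integer representatives; phi is given on
   representatives and required to be well defined, additive, injective
   and surjective modulo the relevant moduli. *)
Definition cyclic_decomp (m q : nat) (li : 'I_m -> nat) (p : 'I_m -> nat)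
  : Prop :=
  exists phi : Z -> 'I_m -> Z,
    (forall a b, zcong (Z.of_nat q) a b ->
       forall i, zcong (Z.of_nat (li i)) (phi a i) (phi b i)) /\
    (forall a b i, zcong (Z.of_nat (li i)) (phi (a + b)%Z i)
                         (phi a i + phi b i)%Z) /\
    (forall a b, (forall i, zcong (Z.of_nat (li i)) (phi a i) (phi b i)) ->
       zcong (Z.of_nat q) a b) /\
    (forall v : 'I_m -> Z, exists a,
       forall i, zcong (Z.of_nat (li i)) (phi a i) (v i)) /\
    (forall i,
       (forall j, j <> i ->
          zcong (Z.of_nat (li j)) (phi (Z.of_nat (p i)) j) 0%Z) /\
       (forall v : Z, exists k : Z,
          zcong (Z.of_nat (li i)) (k * phi (Z.of_nat (p i)) i)%Z v)).

(* The isomorphism Z/qZ ~ (+)_i Z/l_iZ is multiplication by some c_i on the i-th summand;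
   dividing c_i by the image of p_i gives weights w_i with q w_i = 0 and p_j w_i = delta_ij
   (mod l_i).  The map z |-> (q z, (q w_i / l_i) z) pulls the product metric back to G(z - z'),
   where G is 1-periodic, even, subadditive, at most (m + 1) q l times the distance to Z, and,
   since q alpha_j is within K/l of p_j, at most (m + 1)(1 + K) at every alpha_j.  Hence a fixed
   multiple of G is (up to a definiteness term) an admissible metric, which bounds the warped
   metric from below.  Conversely, to move from z to z + D in an admissible metric, round q D to
   an integer J and take the n_j = w_j J (mod l_j) of least absolute value: then
   sum_j n_j p_j = J (mod q), so the word sum_j n_j e_j lands within |q D - J| / q of z + D, up
   to the errors q alpha_j - p_j, at a cost bounded by a multiple of G(D).  So the map is
   bi-Lipschitz, and the Chinese remainder theorem makes its image (m / 2)-dense. *)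

From Stdlib Require Import Reals ZArith Lia Lra ProofIrrelevance Morphisms.
From Coquelicot Require Import Coquelicot.
From HB Require Import structures.
From mathcomp Require Import ssreflect ssrbool ssrfun eqtype ssrnat seq fintype bigop.
Open Scope R_scope.

HB.instance Definition _ := Monoid.isComLaw.Build R 0 Rplus
  (fun x y z => esym (Rplus_assoc x y z)) Rplus_comm Rplus_0_l.
HB.instance Definition _ := Monoid.isComLaw.Build Z 0%Z Z.add Z.add_assoc Z.add_comm Z.add_0_l.

Section RealSums.
Variables (I : Type) (s : seq I).

Lemma sumR_le (F G : I -> R) :
  (forall i, F i <= G i) -> \big[Rplus/0]_(i <- s) F i <= \big[Rplus/0]_(i <- s) G i.
Proof. by move=> FG; apply: (big_ind2 Rle) => // [|*]; [lra | apply: Rplus_le_compat]. Qed.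

Lemma sumR_ge0 (F : I -> R) : (forall i, 0 <= F i) -> 0 <= \big[Rplus/0]_(i <- s) F i.
Proof. by move=> F0; apply: (big_ind (Rle 0)) => // [|*]; [lra | apply: Rplus_le_le_0_compat]. Qed.

Lemma sumR_abs (F : I -> R) :
  Rabs (\big[Rplus/0]_(i <- s) F i) <= \big[Rplus/0]_(i <- s) Rabs (F i).
Proof.
apply: (big_ind2 (fun x y => Rabs x <= y)) => [|x1 x2 y1 y2 h1 h2|i _]; last lra.
- by rewrite Rabs_R0; lra.
- by apply: Rle_trans (Rabs_triang x1 y1) _; lra.
Qed.

Lemma sumR_mull c (F : I -> R) :
  c * \big[Rplus/0]_(i <- s) F i = \big[Rplus/0]_(i <- s) (c * F i).
Proof. by apply: (big_morph (Rmult c)) => [x y|]; ring. Qed.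

Lemma IZR_sum (F : I -> Z) :
  IZR (\big[Z.add/0%Z]_(i <- s) F i) = \big[Rplus/0]_(i <- s) IZR (F i).
Proof. exact: (big_morph IZR plus_IZR). Qed.

End RealSums.

Lemma sumR_const_ord n c : \big[Rplus/0]_(i < n) c = INR n * c.
Proof.
rewrite big_const_ord; elim: n => [|n IH]; first by rewrite /=; ring.
by rewrite iterS IH S_INR; ring.
Qed.

Definition nearest (r : R) : Z :=
  if Rle_dec (frac_part r) (/ 2) then Int_part r else (Int_part r + 1)%Z.

Definition distZ (r : R) : R := Rabs (r - IZR (nearest r)).

Lemma Rmin_frac_le x j : 0 <= x < 1 -> Rmin x (1 - x) <= Rabs (x + IZR j).
Proof.
move=> x01; have [j_ge0 | j_le] : (0 <= j \/ j <= -1)%Z by lia.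
- apply: Rle_trans (Rmin_l _ _) _; have := IZR_le _ _ j_ge0.
  by move=> ?; rewrite Rabs_right; lra.
- apply: Rle_trans (Rmin_r _ _) _; have := IZR_le _ _ j_le.
  by move=> ?; rewrite Rabs_left; lra.
Qed.

Lemma distZ_frac r : distZ r = Rmin (frac_part r) (1 - frac_part r).
Proof.
have [x_ge0 x_lt1] := frac_part_in01 r.
rewrite /distZ /nearest /frac_part /Rmin in x_ge0 x_lt1 *.
case: Rle_dec => x_half; case: Rle_dec => x_min /=; try lra.
- by rewrite Rabs_right; lra.
- by rewrite plus_IZR Rabs_left; lra.
Qed.

Lemma distZ_le r n : distZ r <= Rabs (r - IZR n).
Proof.
rewrite distZ_frac.
have -> : r - IZR n = frac_part r + IZR (Int_part r - n).
  by rewrite /frac_part minus_IZR; ring.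
exact/Rmin_frac_le/frac_part_in01.
Qed.

Lemma distZ_le_half r : distZ r <= / 2.
Proof. by rewrite distZ_frac /Rmin; case: Rle_dec; lra. Qed.

Lemma distZ_ge0 r : 0 <= distZ r.
Proof. exact: Rabs_pos. Qed.

Lemma distZ_le_abs r : distZ r <= Rabs r.
Proof. by have := distZ_le r 0; rewrite Rminus_0_r. Qed.

Lemma distZ_IZR n : distZ (IZR n) = 0.
Proof.
apply: Rle_antisym _ (distZ_ge0 _).
by have := distZ_le (IZR n) n; rewrite Rminus_eq_0 Rabs_R0.
Qed.

Lemma distZ_addZ r n : distZ (r + IZR n) = distZ r.
Proof.
apply: Rle_antisym.
- apply: Rle_trans (distZ_le _ (nearest r + n)) _.
  by rewrite plus_IZR; apply: Req_le; rewrite /distZ; f_equal; ring.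
- apply: Rle_trans (distZ_le _ (nearest (r + IZR n) - n)) _.
  by rewrite minus_IZR; apply: Req_le; rewrite /distZ; f_equal; ring.
Qed.

Lemma distZ_subZ r n : distZ (r - IZR n) = distZ r.
Proof. by rewrite /Rminus -opp_IZR distZ_addZ. Qed.

Lemma distZ_opp r : distZ (- r) = distZ r.
Proof.
suff le_opp s : distZ (- s) <= distZ s.
  by apply: Rle_antisym (le_opp r) _; have := le_opp (- r); rewrite Ropp_involutive.
apply: Rle_trans (distZ_le _ (- nearest s)) _.
by rewrite opp_IZR -Rabs_Ropp; apply: Req_le; rewrite /distZ; f_equal; ring.
Qed.

Lemma distZ_add r s : distZ (r + s) <= distZ r + distZ s.
Proof.
apply: Rle_trans (distZ_le _ (nearest r + nearest s)) _.
rewrite plus_IZR /distZ; apply: Rle_trans (Rabs_triang _ _); apply: Req_le; f_equal; ring.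
Qed.

Lemma scaled_distZ_add c x y : 0 <= c -> c * distZ (x + y) <= c * distZ x + c * distZ y.
Proof. by move=> c0; rewrite -Rmult_plus_distr_l; apply/Rmult_le_compat_l/distZ_add. Qed.

Lemma distZ_sub r s : distZ (r - s) <= distZ r + Rabs s.
Proof.
apply: Rle_trans (distZ_add _ _) _; rewrite distZ_opp.
by have := distZ_le_abs s; lra.
Qed.

Lemma distZ_eq0 r : distZ r = 0 -> r = IZR (nearest r).
Proof. by rewrite /distZ => /Rabs_eq_0; lra. Qed.

Lemma mul_Rabs_div L y : 0 < L -> L * Rabs (y / L) = Rabs y.
Proof. by move=> L_gt0; rewrite Rabs_div ?(Rabs_right L); [field | | ]; lra. Qed.

Lemma scale_distZ L y : 0 < L -> L * distZ (y / L) <= Rabs y.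
Proof.
move=> L_gt0; rewrite -(mul_Rabs_div _ y L_gt0).
by apply/Rmult_le_compat_l/distZ_le_abs; lra.
Qed.

Lemma distZ_IZR_mul_addZ k x n : distZ (IZR k * (x + IZR n)) = distZ (IZR k * x).
Proof. by rewrite Rmult_plus_distr_l -mult_IZR distZ_addZ. Qed.

Definition rep (z : circle) : R := proj1_sig z.

Definition to_circle (r : R) : circle := exist _ (frac_part r) (frac_part_in01 r).

Lemma rep_in01 z : 0 <= rep z < 1.
Proof. exact: proj2_sig z. Qed.

Lemma cadd_to_circle z a : cadd z a = to_circle (rep z + a).
Proof. by []. Qed.

Lemma rep_to_circle r : exists k, rep (to_circle r) = r + IZR k.
Proof. by exists (- Int_part r)%Z; rewrite /rep /= /frac_part opp_IZR; ring. Qed.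

Lemma IZR_small_eq0 n : -1 < IZR n < 1 -> n = 0%Z.
Proof. by case=> /lt_IZR n_gt /lt_IZR n_lt; lia. Qed.

Lemma circle_rep_addZ z z' n : rep z = rep z' + IZR n -> z = z'.
Proof.
have := rep_in01 z; have := rep_in01 z'.
case: z z' => [x x01] [x' x'01]; rewrite /rep /= => ? ? E.
have n0 : n = 0%Z by apply: IZR_small_eq0; lra.
move: x01; rewrite E n0 Rplus_0_r => x01.
by rewrite (proof_irrelevance _ x01 x'01).
Qed.

Lemma to_circle_rep z : to_circle (rep z) = z.
Proof. by have [k E] := rep_to_circle (rep z); apply: circle_rep_addZ E. Qed.

Lemma to_circle_addZ r n : to_circle (r + IZR n) = to_circle r.
Proof.
have [k1 E1] := rep_to_circle (r + IZR n); have [k2 E2] := rep_to_circle r.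
by apply: (circle_rep_addZ _ _ (k1 + n - k2)); rewrite E1 E2 minus_IZR plus_IZR; ring.
Qed.

Lemma cdist_distZ z z' : cdist z z' = distZ (rep z - rep z').
Proof.
have := rep_in01 z; have := rep_in01 z'; rewrite /cdist -/(rep z) -/(rep z').
set x := rep z - rep z' => ? ?; have x_bound : -1 < x < 1 by rewrite /x; lra.
apply: Rle_antisym.
- have [n ->] : exists n, distZ x = Rabs (x - IZR n) by exists (nearest x).
  have [-> | n_ne0] := Z.eq_dec n 0; first by rewrite Rminus_0_r; apply: Rmin_l.
  apply: Rle_trans (Rmin_r _ _) _.
  have : 1 <= Rabs (IZR n).
    have [n_ge1 | n_le] : (1 <= n \/ 1 <= - n)%Z by lia.
    + by move/IZR_le: n_ge1 => ?; rewrite Rabs_right; lra.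
    + by move/IZR_le: n_le; rewrite opp_IZR => ?; rewrite Rabs_left; lra.
  by have := Rabs_triang_inv (IZR n) x; rewrite Rabs_minus_sym; lra.
- apply: Rmin_glb; first exact: distZ_le_abs.
  have [x_ge0 | x_lt0] := Rle_lt_dec 0 x.
  + by have := distZ_le x 1; rewrite (Rabs_right x) ?(Rabs_left1 (x - _)); lra.
  + by have := distZ_le x (-1); rewrite (Rabs_left x) ?(Rabs_right (x - _)); lra.
Qed.

Lemma cdist_to_circle_l r y : cdist (to_circle r) y = distZ (r - rep y).
Proof.
have [k E] := rep_to_circle r; rewrite cdist_distZ E.
by rewrite -(distZ_addZ (r - rep y) k); f_equal; ring.
Qed.

Lemma cdist_to_circle a b : cdist (to_circle a) (to_circle b) = distZ (a - b).
Proof.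
have [k E] := rep_to_circle b; rewrite cdist_to_circle_l E.
by rewrite -(distZ_addZ (a - b) (- k)) opp_IZR; f_equal; ring.
Qed.

Lemma cdist_ge0 z z' : 0 <= cdist z z'.
Proof. by rewrite cdist_distZ; apply: distZ_ge0. Qed.

Lemma cdist_le_half z z' : cdist z z' <= / 2.
Proof. by rewrite cdist_distZ; apply: distZ_le_half. Qed.

Lemma cdist_sym z z' : cdist z z' = cdist z' z.
Proof. by rewrite !cdist_distZ -distZ_opp; f_equal; ring. Qed.

Lemma cdist_triangle z z' z'' : cdist z z'' <= cdist z z' + cdist z' z''.
Proof.
rewrite !cdist_distZ; apply: Rle_trans (distZ_add _ _); apply: Req_le; f_equal; ring.
Qed.

Lemma cdist_eq0 z z' : cdist z z' = 0 -> z = z'.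
Proof.
rewrite cdist_distZ => /distZ_eq0 E; apply: (circle_rep_addZ _ _ (nearest (rep z - rep z'))).
by rewrite -E; ring.
Qed.

Lemma Lub_Rbar_between (E : R -> Prop) v U :
  E v -> (forall r, E r -> r <= U) -> v <= real (Lub_Rbar E) <= U.
Proof.
move=> Ev E_le; have [ub lub] := Lub_Rbar_correct E.
have := ub v Ev; have : Rbar_le (Lub_Rbar E) U by apply: lub => r /E_le.
by case: (Lub_Rbar E).
Qed.

(* The upper bound is needed for the lower one too: [real] sends an infinite supremum to 0. *)
Lemma warped_dist_between {m alpha t d0 U} z z' :
  warp_admissible m alpha t d0 ->
  (forall d, warp_admissible m alpha t d -> d z z' <= U) ->
  d0 z z' <= warped_dist m alpha t z z' <= U.
Proof.
move=> d0_adm d_le; apply: Lub_Rbar_between; first by exists d0.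
by move=> r [d [d_adm ->]]; apply: d_le.
Qed.

Section AdmissibleUpperBound.
Context {m : nat} {alpha : 'I_m -> R} {t : R} {d : circle -> circle -> R}.
Hypothesis d_adm : warp_admissible m alpha t d.

Lemma admissible_step_nat a : (forall z, d z (cadd z a) <= 1) ->
  forall (k : nat) z, d z (to_circle (rep z + INR k * a)) <= INR k.
Proof.
have [[_ [d_eq0 [_ d_tri]]] _] := d_adm; move=> step; elim=> [|k IH] z.
  by rewrite INR_0 Rmult_0_l Rplus_0_r to_circle_rep (proj2 (d_eq0 z z)); first lra.
set y := to_circle (rep z + INR k * a).
have -> : to_circle (rep z + INR k.+1 * a) = cadd y a.
  have [n E] := rep_to_circle (rep z + INR k * a).
  by rewrite cadd_to_circle E -(to_circle_addZ _ n) S_INR; f_equal; ring.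
have IHz : d z y <= INR k := IH z.
by apply: Rle_trans (d_tri _ y _) _; have := step y; rewrite S_INR; lra.
Qed.

Lemma admissible_step j (n : Z) z :
  d z (to_circle (rep z + IZR n * alpha j)) <= Rabs (IZR n).
Proof.
have [_ [_ steps]] := d_adm.
have [n_ge0 | n_lt0] := Z.le_gt_cases 0 n.
- rewrite -(Z2Nat.id n n_ge0) -INR_IZR_INZ Rabs_right; last exact/Rle_ge/pos_INR.
  by apply: admissible_step_nat => w; case: (steps w j).
- rewrite -(Z.opp_involutive n) -(Z2Nat.id (- n)); last lia.
  rewrite opp_IZR -INR_IZR_INZ Rabs_Ropp Rabs_right; last exact/Rle_ge/pos_INR.
  rewrite -Ropp_mult_distr_l Ropp_mult_distr_r.
  by apply: admissible_step_nat => w; case: (steps w j).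
Qed.

Lemma admissible_le_word (n : 'I_m -> Z) (s : seq 'I_m) z z' :
  d z z' <= \big[Rplus/0]_(j <- s) Rabs (IZR (n j)) +
            t * distZ (rep z' - rep z - \big[Rplus/0]_(j <- s) (IZR (n j) * alpha j)).
Proof.
have [[_ [_ [_ d_tri]]] [d_le_t _]] := d_adm.
elim: s z => [|j s IH] z.
  rewrite !big_nil Rminus_0_r Rplus_0_l -distZ_opp Ropp_minus_distr -cdist_distZ.
  exact: d_le_t.
set y := to_circle (rep z + IZR (n j) * alpha j).
have step_z : d z y <= Rabs (IZR (n j)) := admissible_step j (n j) z.
apply: Rle_trans (d_tri _ y _) _; have := IH y.
have [k ->] : exists k, rep y = rep z + IZR (n j) * alpha j + IZR k by apply: rep_to_circle.
rewrite !big_cons -(distZ_addZ _ k).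
have -> : rep z' - (rep z + IZR (n j) * alpha j + IZR k) -
          \big[Rplus/0]_(i <- s) (IZR (n i) * alpha i) + IZR k =
          rep z' - rep z - (IZR (n j) * alpha j + \big[Rplus/0]_(i <- s) (IZR (n i) * alpha i)).
  by ring.
lra.
Qed.

End AdmissibleUpperBound.

Section GaugeMetric.
Variables (m : nat) (alpha : 'I_m -> R) (t : R) (G : R -> R).
Hypotheses (t_ge1 : 1 <= t) (G_ge0 : forall x, 0 <= G x)
  (G_opp : forall x, G (- x) = G x) (G_add : forall x y, G (x + y) <= G x + G y)
  (G_addZ : forall x n, G (x + IZR n) = G x) (G_le : forall x, G x <= t / 2 * distZ x)
  (G_alpha : forall j, G (alpha j) <= / 2).

(* [G] may vanish off the diagonal; the [cdist] term makes the metric definite. *)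
Definition gauge_metric (z z' : circle) : R := G (rep z - rep z') + / 2 * cdist z z'.

Lemma gauge_cadd z a : G (rep z - rep (cadd z a)) = G a.
Proof.
have [k ->] := rep_to_circle (rep z + a).
by rewrite -G_opp -(G_addZ a k); f_equal; ring.
Qed.

Lemma gauge_metric_admissible : warp_admissible m alpha t gauge_metric.
Proof.
have G0 : G 0 = 0.
  by apply: Rle_antisym (G_ge0 0); have := G_le 0; rewrite (distZ_IZR 0); lra.
have cdist_half z z' : / 2 * cdist z z' <= / 4.
  by have := cdist_le_half z z'; lra.
rewrite /gauge_metric; split; [split; [|split; [|split]] | split].
- by move=> z z'; have := G_ge0 (rep z - rep z'); have := cdist_ge0 z z'; lra.
- move=> z z'; split=> [E | <-].
    by apply: cdist_eq0; have := G_ge0 (rep z - rep z'); have := cdist_ge0 z z'; lra.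
  by rewrite Rminus_eq_0 G0 cdist_distZ Rminus_eq_0 (distZ_IZR 0); lra.
- by move=> z z'; rewrite -G_opp Ropp_minus_distr cdist_sym.
- move=> z z' z''; have := cdist_triangle z z' z''.
  have := G_add (rep z - rep z') (rep z' - rep z'').
  have -> : rep z - rep z' + (rep z' - rep z'') = rep z - rep z'' by ring.
  lra.
- move=> z z'; have := G_le (rep z - rep z'); have := cdist_ge0 z z'.
  by rewrite -cdist_distZ; nra.
- move=> z j; rewrite !gauge_cadd G_opp; have := G_alpha j.
  by have := cdist_half z (cadd z (alpha j)); have := cdist_half z (cadd z (- alpha j)); lra.
Qed.

End GaugeMetric.

Local Open Scope Z_scope.

(* [zcong] and [Zdiv.eqm] unfold to equalities, which defeats setoid rewriting. *)
Definition cong (N a b : Z) : Prop := (N | a - b).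

#[local] Instance cong_equiv N : Equivalence (cong N).
Proof.
split=> [a | a b [k E] | a b c [k1 E1] [k2 E2]];
  [exists 0 | exists (- k) | exists (k1 + k2)]; lia.
Qed.

#[local] Instance cong_add N : Proper (cong N ==> cong N ==> cong N) Z.add.
Proof. by move=> a a' [k1 E1] b b' [k2 E2]; exists (k1 + k2); lia. Qed.

#[local] Instance cong_mul N : Proper (cong N ==> cong N ==> cong N) Z.mul.
Proof. by move=> a a' [k1 E1] b b' [k2 E2]; exists (k1 * b + a' * k2); nia. Qed.

Lemma zcong_cong N a b : (0 < N) -> zcong N a b <-> cong N a b.
Proof.
move=> N_gt0; rewrite /zcong /cong; split=> [E | [k E]].
  by exists (a / N - b / N); have := Z.div_mod a N; have := Z.div_mod b N; lia.
by rewrite (_ : a = b + k * N) ?Z_mod_plus_full //; lia.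
Qed.

Lemma cong_IZR {N a b} : cong N a b -> exists k, IZR a = (IZR b + IZR k * IZR N)%R.
Proof. by case=> k E; exists k; rewrite -mult_IZR -plus_IZR; f_equal; lia. Qed.

Lemma cong_mod N a : (0 < N) -> cong N (a mod N) a.
Proof. by move=> N_gt0; exists (- (a / N)); have := Z.div_mod a N; lia. Qed.

Lemma cong_sum_pred1 (I : finType) N (F : I -> Z) i :
  (forall j, j != i -> cong N (F j) 0) -> cong N (\big[Z.add/0]_j F j) (F i).
Proof.
move=> F0; rewrite (bigD1 i) //=.
have -> : cong N (\big[Z.add/0]_(j | j != i) F j) 0.
  by apply: (big_ind (fun x => cong N x 0)) => [|x y -> ->|j /F0 //]; reflexivity.
by rewrite Z.add_0_r; reflexivity.
Qed.

Lemma additive_cong_linear N (g : Z -> Z) :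
  (forall a b, cong N (g (a + b)) (g a + g b)) -> forall a, cong N (g a) (a * g 1).
Proof.
move=> g_add; have g0 : cong N (g 0) 0.
  by have := g_add 0 0; rewrite Z.add_0_r => -[k E]; exists (- k); lia.
elim/Z.peano_ind => [|a IH|a IH]; first by rewrite g0; reflexivity.
- by rewrite -Z.add_1_r g_add IH Z.mul_add_distr_r Z.mul_1_l; reflexivity.
- have [k1 E1] := IH; have [k2 E2] := g_add (Z.pred a) 1.
  by exists (k1 - k2); rewrite Z.add_1_r Z.succ_pred in E2; nia.
Qed.

Lemma cyclic_decomp_multipliers {m q} {li p : 'I_m -> nat} :
  (1 <= q)%nat -> (forall i, 0 < li i)%nat -> cyclic_decomp m q li p ->
  exists c u : 'I_m -> Z,
  [/\ forall i, cong (Z.of_nat (li i)) (Z.of_nat q * c i) 0,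
      forall i j, i != j -> cong (Z.of_nat (li i)) (Z.of_nat (p j) * c i) 0,
      forall i, cong (Z.of_nat (li i)) (u i * (Z.of_nat (p i) * c i)) 1 &
      forall a b, (forall i, cong (Z.of_nat (li i)) (a * c i) (b * c i)) -> cong (Z.of_nat q) a b].
Proof.
move=> /leP q_gt0 li_gt0 [phi [phi_wd [phi_add [phi_inj [_ phi_gen]]]]].
have L_gt0 i : 0 < Z.of_nat (li i) by have /ltP := li_gt0 i; lia.
have phi_lin a i : cong (Z.of_nat (li i)) (phi a i) (a * phi 1 i).
  by apply: (additive_cong_linear _ (phi^~ i)) => x y; apply/zcong_cong/phi_add.
have /fin_all_exists [u u_inv] :
    forall i, exists k, cong (Z.of_nat (li i)) (k * (Z.of_nat (p i) * phi 1 i)) 1.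
  move=> i; have [k k_inv] := (phi_gen i).2 1.
  by exists k; rewrite -phi_lin; apply/zcong_cong.
exists (phi 1), u; split=> //.
- move=> i; have phi_q : cong (Z.of_nat (li i)) (phi (Z.of_nat q) i) (phi 0 i).
    by apply/(zcong_cong _ _ _ (L_gt0 i))/phi_wd; rewrite /zcong Z_mod_same_full Zmod_0_l.
  by rewrite -phi_lin phi_q (phi_lin 0 i) Z.mul_0_l; reflexivity.
- move=> i j /eqP ij; rewrite -phi_lin; apply/zcong_cong => //.
  by apply: (phi_gen j).1 => ji; apply: ij.
- move=> a b ac_bc; apply/zcong_cong/phi_inj; first lia.
  by move=> i; apply/zcong_cong => //; rewrite (phi_lin a i) (phi_lin b i).
Qed.

Lemma cyclic_decomp_weights {m q} {li p : 'I_m -> nat} :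
  (1 <= q)%nat -> (forall i, 0 < li i)%nat -> cyclic_decomp m q li p ->
  exists w : 'I_m -> Z,
  [/\ forall i, 0 <= w i < Z.of_nat (li i),
      forall i, cong (Z.of_nat (li i)) (Z.of_nat q * w i) 0,
      forall i j, cong (Z.of_nat (li i)) (Z.of_nat (p j) * w i) (if i == j then 1 else 0) &
      forall (n : 'I_m -> Z) J, (forall j, cong (Z.of_nat (li j)) (n j) (w j * J)) ->
        cong (Z.of_nat q) (\big[Z.add/0]_j (n j * Z.of_nat (p j))) J].
Proof.
move=> q_ge1 li_gt0 /(cyclic_decomp_multipliers q_ge1 li_gt0) [c [u [q_c p_c u_inv c_inj]]].
have L_gt0 i : 0 < Z.of_nat (li i) by have /ltP := li_gt0 i; lia.
have w_cu i := cong_mod _ (c i * u i) (L_gt0 i).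
exists (fun i => (c i * u i) mod Z.of_nat (li i)); split.
- by move=> i; apply: Z.mod_pos_bound.
- by move=> i; rewrite w_cu Z.mul_assoc q_c Z.mul_0_l; reflexivity.
- move=> i j; rewrite w_cu.
  have -> : Z.of_nat (p j) * (c i * u i) = u i * (Z.of_nat (p j) * c i) by ring.
  case: eqP => [<- | /eqP ij]; first by rewrite u_inv; reflexivity.
  by rewrite (p_c _ _ ij) Z.mul_0_r; reflexivity.
- move=> n J n_w; apply: c_inj => i.
  rewrite (big_morph (fun x => x * c i) (fun x y => Z.mul_add_distr_r x y _) (Z.mul_0_l _)).
  rewrite (cong_sum_pred1 _ _ _ i) => [|j ji]; last first.
    by rewrite eq_sym in ji; rewrite -Z.mul_assoc (p_c _ _ ji) Z.mul_0_r; reflexivity.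
  rewrite n_w w_cu.
  have -> : c i * u i * J * Z.of_nat (p i) * c i = J * c i * (u i * (Z.of_nat (p i) * c i)) by ring.
  by rewrite u_inv Z.mul_1_r; reflexivity.
Qed.

Local Close Scope Z_scope.

Definition balanced_mod (x : Z) (L : nat) : Z := (x - nearest (IZR x / INR L) * Z.of_nat L)%Z.

Lemma balanced_mod_cong x L : cong (Z.of_nat L) (balanced_mod x L) x.
Proof. by exists (- nearest (IZR x / INR L))%Z; rewrite /balanced_mod; ring. Qed.

Lemma Rabs_balanced_mod x L :
  (0 < L)%nat -> Rabs (IZR (balanced_mod x L)) = INR L * distZ (IZR x / INR L).
Proof.
move=> /ltP/lt_0_INR L_gt0; rewrite /balanced_mod /distZ minus_IZR mult_IZR -INR_IZR_INZ.
rewrite (_ : _ - _ = INR L * (IZR x / INR L - IZR (nearest (IZR x / INR L)))).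
  by rewrite Rabs_mult Rabs_right; lra.
by field; lra.
Qed.

Lemma bilipschitz_quasi_isometry {X Y : Type} (dX : X -> X -> R) (dY : Y -> Y -> R) C A f :
  0 < C -> 0 <= A ->
  (forall x x', dX x x' <= C * dY (f x) (f x') /\ dY (f x) (f x') <= C * dX x x') ->
  (forall y, exists x, dY (f x) y <= A) -> quasi_isometry dX dY C A f.
Proof.
move=> C_gt0 A_ge0 lip dense; split=> // x x'; have [lo hi] := lip x x'; split; last lra.
have : / C * dX x x' <= / C * (C * dY (f x) (f x')).
  by apply: Rmult_le_compat_l => //; apply/Rlt_le/Rinv_0_lt_compat.
by rewrite -Rmult_assoc Rinv_l ?Rmult_1_l; lra.
Qed.

Section Level.
Variables (m q : nat) (K l : R) (alpha : 'I_m -> R) (p li : 'I_m -> nat) (w : 'I_m -> Z).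
Hypotheses (q_ge1 : (1 <= q)%nat) (q_le_l : INR q <= l) (K_gt0 : 0 < K)
  (alpha_close : forall j, Rabs (INR q * alpha j - INR (p j)) < K / l)
  (li_gt0 : forall i, (0 < li i)%nat)
  (w_range : forall i, (0 <= w i < Z.of_nat (li i))%Z)
  (q_w : forall i, cong (Z.of_nat (li i)) (Z.of_nat q * w i) 0)
  (p_w : forall i j, cong (Z.of_nat (li i)) (Z.of_nat (p j) * w i) (if i == j then 1 else 0)%Z)
  (w_lift : forall (n : 'I_m -> Z) J, (forall j, cong (Z.of_nat (li j)) (n j) (w j * J)%Z) ->
     cong (Z.of_nat q) (\big[Z.add/0%Z]_j (n j * Z.of_nat (p j))%Z) J).

Local Notation t := (INR q * l).
Local Notation M := (INR m).

Lemma q_pos : 0 < INR q.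
Proof. by apply/lt_0_INR/leP. Qed.

Lemma li_pos i : 0 < INR (li i).
Proof. by apply/lt_0_INR/ltP. Qed.

Lemma w_bounds i : 0 <= IZR (w i) <= INR (li i).
Proof. by have [? ?] := w_range i; rewrite INR_IZR_INZ; split; apply: IZR_le; lia. Qed.

Lemma li_le_q i : INR (li i) <= INR q.
Proof.
rewrite !INR_IZR_INZ; apply/IZR_le/Z.divide_pos_le; first by move/leP: q_ge1; lia.
have [k1 E1] := q_w i; have := p_w i i; rewrite eqxx => -[k2 E2].
exists (Z.of_nat (p i) * k1 - Z.of_nat q * k2)%Z.
by rewrite Z.mul_sub_distr_r -!Z.mul_assoc -E1 -E2; ring.
Qed.

Lemma w_le_l i : IZR (w i) <= l.
Proof. by have := w_bounds i; have := li_le_q i; lra. Qed.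

Lemma q_w_IZR i : exists k, INR q * IZR (w i) = IZR k * INR (li i).
Proof.
have [k E] := cong_IZR (q_w i); exists k.
by rewrite INR_IZR_INZ -mult_IZR E INR_IZR_INZ; ring.
Qed.

Lemma scaled_close x j : 0 <= x <= l -> x * Rabs (INR q * alpha j - INR (p j)) <= K.
Proof.
move=> x_bd; have l_gt0 : 0 < l by have := q_pos; lra.
apply: Rle_trans (_ : l * (K / l) <= K); last by apply: Req_le; field; lra.
by apply: Rmult_le_compat; try lra; [apply: Rabs_pos | apply/Rlt_le/alpha_close].
Qed.

Definition factor_gauge i (D : R) : R := INR (li i) * distZ (INR q * IZR (w i) * D / INR (li i)).

Definition gauge (D : R) : R := l * distZ (INR q * D) + \big[Rplus/0]_(i < m) factor_gauge i D.

Definition torus_map (z : circle) : circle * ('I_m -> circle) :=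
  (to_circle (INR q * rep z), fun i => to_circle (INR q * IZR (w i) * rep z / INR (li i))).

Lemma prod_dist_torus_map z z' :
  prod_dist m l li (torus_map z) (torus_map z') = gauge (rep z - rep z').
Proof.
rewrite /prod_dist /gauge /= cdist_to_circle Rmult_minus_distr_l; f_equal.
apply: eq_bigr => i _; rewrite /factor_gauge cdist_to_circle; do 2 f_equal.
by field; have := li_pos i; lra.
Qed.

Lemma gauge_ge0 D : 0 <= gauge D.
Proof.
have := distZ_ge0 (INR q * D); have := q_pos.
have : 0 <= \big[Rplus/0]_(i < m) factor_gauge i D.
  by apply: sumR_ge0 => i; apply: Rmult_le_pos; [apply: pos_INR | apply: distZ_ge0].
by rewrite /gauge; nra.
Qed.

Lemma gauge_opp D : gauge (- D) = gauge D.
Proof.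
rewrite /gauge -Ropp_mult_distr_r distZ_opp; f_equal.
apply: eq_bigr => i _; rewrite /factor_gauge -distZ_opp; do 2 f_equal; rewrite /Rdiv; ring.
Qed.

Lemma gauge_add D D' : gauge (D + D') <= gauge D + gauge D'.
Proof.
have head : l * distZ (INR q * (D + D')) <= l * distZ (INR q * D) + l * distZ (INR q * D').
  by rewrite Rmult_plus_distr_l; apply: scaled_distZ_add; have := q_pos; lra.
suff tail : \big[Rplus/0]_(i < m) factor_gauge i (D + D') <=
    \big[Rplus/0]_(i < m) factor_gauge i D + \big[Rplus/0]_(i < m) factor_gauge i D'.
  by rewrite /gauge; lra.
rewrite -big_split; apply: sumR_le => i /=; rewrite /factor_gauge.
apply: Rle_trans (scaled_distZ_add _ _ _ (pos_INR _)); apply: Req_le.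
by do 2 f_equal; rewrite /Rdiv; ring.
Qed.

Lemma gauge_addZ D n : gauge (D + IZR n) = gauge D.
Proof.
rewrite /gauge; f_equal; first by rewrite INR_IZR_INZ distZ_IZR_mul_addZ.
apply: eq_bigr => i _; rewrite /factor_gauge.
have [k E] := q_w_IZR i; have := li_pos i => li0.
have -> : INR q * IZR (w i) * (D + IZR n) / INR (li i) =
          INR q * IZR (w i) * D / INR (li i) + IZR (k * n).
  by rewrite mult_IZR Rmult_plus_distr_l E; field; lra.
by rewrite distZ_addZ.
Qed.

Lemma gauge_le_abs D : gauge D <= (M + 1) * t * Rabs D.
Proof.
have q0 := q_pos; have D0 := Rabs_pos D.
have head : l * distZ (INR q * D) <= t * Rabs D.
  have := distZ_le_abs (INR q * D); rewrite Rabs_mult Rabs_right; last lra.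
  by move=> h; have := Rmult_le_compat_l _ _ _ (ltac:(lra) : 0 <= l) h; lra.
have term i : factor_gauge i D <= t * Rabs D.
  rewrite /factor_gauge; apply: Rle_trans (scale_distZ _ _ (li_pos i)) _.
  have := w_bounds i; have := w_le_l i => ? ?.
  rewrite !Rabs_mult (Rabs_right (INR q)) ?(Rabs_right (IZR (w i))); try lra.
  by apply: Rmult_le_compat_r => //; apply: Rmult_le_compat_l; lra.
have : \big[Rplus/0]_(i < m) factor_gauge i D <= M * (t * Rabs D).
  by rewrite -sumR_const_ord; apply: sumR_le.
by rewrite /gauge; nra.
Qed.

Lemma gauge_le D : gauge D <= (M + 1) * t * distZ D.
Proof.
rewrite -(gauge_addZ D (- nearest D)) opp_IZR /distZ.
by apply: Rle_trans (gauge_le_abs _) _; apply: Req_le.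
Qed.

Lemma gauge_alpha j : gauge (alpha j) <= (M + 1) * (1 + K).
Proof.
set e := INR q * alpha j - INR (p j).
have e_abs := Rabs_pos e; have l_bd : 0 <= l <= l by have := q_pos; lra.
have head : l * distZ (INR q * alpha j) <= K.
  have -> : INR q * alpha j = e + IZR (Z.of_nat (p j)) by rewrite -INR_IZR_INZ /e; ring.
  rewrite distZ_addZ; apply: Rle_trans (scaled_close _ j l_bd).
  by apply: Rmult_le_compat_l; [lra | apply: distZ_le_abs].
have term i : factor_gauge i (alpha j) <= 1 + K.
  rewrite /factor_gauge; have [k E] := cong_IZR (p_w i j); rewrite mult_IZR -!INR_IZR_INZ in E.
  set delta := IZR (if i == j then 1%Z else 0%Z) in E.
  have delta_abs : Rabs delta <= 1.
    by rewrite /delta; case: (i == j); rewrite ?Rabs_R1 ?Rabs_R0; lra.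
  have -> : INR q * IZR (w i) * alpha j / INR (li i) = (delta + IZR (w i) * e) / INR (li i) + IZR k.
    have -> : delta = INR (p j) * IZR (w i) - IZR k * INR (li i) by rewrite E; ring.
    by rewrite /e; field; have := li_pos i; lra.
  rewrite distZ_addZ; apply: Rle_trans (scale_distZ _ _ (li_pos i)) _.
  have close_w : IZR (w i) * Rabs e <= K.
    by apply: scaled_close; have := w_bounds i; have := w_le_l i; lra.
  apply: Rle_trans (Rabs_triang _ _) _; rewrite Rabs_mult (Rabs_right (IZR (w i))); first lra.
  by have := w_bounds i; lra.
have : \big[Rplus/0]_(i < m) factor_gauge i (alpha j) <= M * (1 + K).
  by rewrite -sumR_const_ord; apply: sumR_le.
by rewrite /gauge; have := pos_INR m; nra.
Qed.

Lemma t_ge1 : 1 <= t.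
Proof. by have := le_INR 1 q (elimT leP q_ge1); rewrite /=; nra. Qed.

Let lower_scale := / (2 * (M + 1) * (1 + K)).

Lemma lower_scale_gt0 : 0 < lower_scale.
Proof. by apply: Rinv_0_lt_compat; have := pos_INR m; nra. Qed.

Lemma lower_metric_admissible :
  warp_admissible m alpha t (gauge_metric (fun D => lower_scale * gauge D)).
Proof.
have c0 := lower_scale_gt0; have M0 := pos_INR m.
have cM : lower_scale * ((M + 1) * (1 + K)) = / 2 by rewrite /lower_scale; field; lra.
have cM1 : lower_scale * (M + 1) <= / 2 by rewrite -cM; apply: Rmult_le_compat_l; nra.
apply: gauge_metric_admissible.
- exact: t_ge1.
- by move=> x; apply: Rmult_le_pos; [lra | apply: gauge_ge0].
- by move=> x; rewrite gauge_opp.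
- by move=> x y; rewrite -Rmult_plus_distr_l; apply: Rmult_le_compat_l; [lra | apply: gauge_add].
- by move=> x n; rewrite gauge_addZ.
- move=> x; have := gauge_le x; have := t_ge1; have := distZ_ge0 x => ? ? ?.
  have : 0 <= t * distZ x by nra.
  by nra.
- by move=> j; rewrite -cM; apply: Rmult_le_compat_l; [lra | apply: gauge_alpha].
Qed.

Lemma admissible_le_lattice {d} (n : 'I_m -> Z) z z' : warp_admissible m alpha t d ->
  d z z' <= (1 + K) * \big[Rplus/0]_(j < m) Rabs (IZR (n j)) +
    t * distZ (rep z' - rep z - IZR (\big[Z.add/0%Z]_(j < m) (n j * Z.of_nat (p j))%Z) / INR q).
Proof.
move=> d_adm; have := admissible_le_word d_adm n (index_enum 'I_m) z z'.
have q0 := q_pos; have l_bd : 0 <= l <= l by lra.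
set N := \big[Rplus/0]_(j <- index_enum 'I_m) Rabs (IZR (n j)).
set A := IZR (\big[Z.add/0%Z]_(j < m) (n j * Z.of_nat (p j))%Z).
set E := \big[Rplus/0]_(j < m) (IZR (n j) * (INR q * alpha j - INR (p j))).
have -> : \big[Rplus/0]_(j <- index_enum 'I_m) (IZR (n j) * alpha j) = A / INR q + E / INR q.
  rewrite /A /E (IZR_sum _ (index_enum _)) /Rdiv !(Rmult_comm _ (/ INR q)) !sumR_mull -big_split.
  by apply: eq_bigr => j _ /=; rewrite mult_IZR -INR_IZR_INZ; field; lra.
have E_le : t * Rabs (E / INR q) <= K * N.
  rewrite Rabs_div ?(Rabs_right (INR q)); try lra.
  have -> : t * (Rabs E / INR q) = l * Rabs E by field; lra.
  apply: Rle_trans (Rmult_le_compat_l _ _ _ (proj1 l_bd) (sumR_abs _ _ _)) _.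
  rewrite /N !sumR_mull; apply: sumR_le => j; rewrite Rabs_mult.
  by have := scaled_close l j l_bd; have := Rabs_pos (IZR (n j)); nra.
have := distZ_sub (rep z' - rep z - A / INR q) (E / INR q).
have -> : rep z' - rep z - A / INR q - E / INR q = rep z' - rep z - (A / INR q + E / INR q) by ring.
by move=> split_le word; have := Rmult_le_compat_l _ _ _ (ltac:(nra) : 0 <= t) split_le; lra.
Qed.

Lemma balanced_mod_le j D (J : Z) :
  Rabs (IZR (balanced_mod (w j * J) (li j))) <= factor_gauge j D + l * Rabs (INR q * D - IZR J).
Proof.
have lj := li_pos j; rewrite Rabs_balanced_mod // mult_IZR.
have -> : IZR (w j) * IZR J / INR (li j) =
          INR q * IZR (w j) * D / INR (li j) - IZR (w j) * (INR q * D - IZR J) / INR (li j).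
  by field; lra.
apply: Rle_trans (Rmult_le_compat_l _ _ _ (Rlt_le _ _ lj) (distZ_sub _ _)) _.
rewrite Rmult_plus_distr_l /factor_gauge; apply: Rplus_le_compat_l.
rewrite mul_Rabs_div // Rabs_mult (Rabs_right (IZR (w j))); last by have := w_bounds j; lra.
by apply: Rmult_le_compat_r; [apply: Rabs_pos | apply: w_le_l].
Qed.

Lemma admissible_le_gauge {d} z z' : warp_admissible m alpha t d ->
  d z z' <= (M + 2) * (1 + K) * gauge (rep z - rep z').
Proof.
move=> d_adm; rewrite -gauge_opp Ropp_minus_distr; set D := rep z' - rep z.
have q0 := q_pos; have l_gt0 : 0 < l by lra.
pose J := nearest (INR q * D); set a := INR q * D - IZR J.
pose n j := balanced_mod (w j * J) (li j).
have [R ER] := cong_IZR (w_lift n J (fun j => balanced_mod_cong _ _)).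
have word := admissible_le_lattice n z z' d_adm; rewrite -/D ER in word.
have tail : t * distZ (D - (IZR J + IZR R * IZR (Z.of_nat q)) / INR q) <= l * Rabs a.
  rewrite -INR_IZR_INZ (_ : D - _ = a / INR q - IZR R); last by rewrite /a; field; lra.
  rewrite distZ_subZ; apply: Rle_trans (Rmult_le_compat_l _ _ _ _ (distZ_le_abs _)) _; first nra.
  by rewrite Rabs_div ?(Rabs_right (INR q)); try lra; apply: Req_le; field; lra.
have n_sum : \big[Rplus/0]_(j < m) Rabs (IZR (n j)) <=
             \big[Rplus/0]_(j < m) factor_gauge j D + M * (l * Rabs a).
  by rewrite -sumR_const_ord -big_split; apply: sumR_le => j; apply: balanced_mod_le.
have S0 : 0 <= \big[Rplus/0]_(j < m) factor_gauge j D.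
  by apply: sumR_ge0 => j; apply: Rmult_le_pos; [apply: pos_INR | apply: distZ_ge0].
have x0 : 0 <= l * Rabs a by apply: Rmult_le_pos; [lra | apply: Rabs_pos].
apply: Rle_trans word _; apply: Rle_trans (Rplus_le_compat_l _ _ _ tail) _.
apply: Rle_trans (Rplus_le_compat_r _ _ _ (Rmult_le_compat_l _ _ _ _ n_sum)) _; first lra.
rewrite /gauge /distZ -/J -/a.
have := pos_INR m; have := Rmult_le_pos _ _ (pos_INR m) S0; have := Rmult_le_pos _ _ (pos_INR m) x0.
nra.
Qed.

Lemma w_mul_sum_p (k : 'I_m -> Z) i :
  cong (Z.of_nat (li i)) (w i * \big[Z.add/0%Z]_j (k j * Z.of_nat (p j)))%Z (k i).
Proof.
rewrite (big_morph (Z.mul (w i)) (Z.mul_add_distr_l _) (Z.mul_0_r _)).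
rewrite (cong_sum_pred1 _ _ _ i) => [|j ji].
  have -> : (w i * (k i * Z.of_nat (p i)) = k i * (Z.of_nat (p i) * w i))%Z by ring.
  by rewrite p_w eqxx Z.mul_1_r; reflexivity.
have -> : (w i * (k j * Z.of_nat (p j)) = k j * (Z.of_nat (p j) * w i))%Z by ring.
by rewrite p_w eq_sym (negbTE ji) Z.mul_0_r; reflexivity.
Qed.

Lemma torus_map_dense y : exists z, prod_dist m l li (torus_map z) y <= M / 2.
Proof.
case: y => y0 ys; have q0 := q_pos.
pose k i := nearest (INR (li i) * rep (ys i) - IZR (w i) * rep y0).
pose J := \big[Z.add/0%Z]_j (k j * Z.of_nat (p j))%Z.
set r := (rep y0 + IZR J) / INR q.
exists (to_circle r); have [k0 E0] := rep_to_circle r.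
rewrite /prod_dist /torus_map E0 /= cdist_to_circle_l.
have -> : INR q * (r + IZR k0) - rep y0 = IZR (J + Z.of_nat q * k0).
  by rewrite plus_IZR mult_IZR -INR_IZR_INZ /r; field; lra.
rewrite distZ_IZR Rmult_0_r Rplus_0_l (_ : M / 2 = \big[Rplus/0]_(i < m) / 2); last first.
  by rewrite sumR_const_ord.
apply: sumR_le => i; rewrite cdist_to_circle_l; have li0 := li_pos i.
have [s Es] := q_w_IZR i; have [n En] := cong_IZR (w_mul_sum_p k i).
rewrite mult_IZR -INR_IZR_INZ in En.
have -> : INR q * IZR (w i) * (r + IZR k0) / INR (li i) - rep (ys i) =
          (IZR (w i) * rep y0 + IZR (w i) * IZR J) / INR (li i) - rep (ys i) + IZR (s * k0).
  have s_eq : IZR s = INR q * IZR (w i) / INR (li i) by rewrite Es; field; lra.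
  by rewrite mult_IZR s_eq /r; field; lra.
rewrite distZ_addZ En.
set v := INR (li i) * rep (ys i) - IZR (w i) * rep y0.
have -> : (IZR (w i) * rep y0 + (IZR (k i) + IZR n * INR (li i))) / INR (li i) - rep (ys i) =
          (IZR (nearest v) - v) / INR (li i) + IZR n.
  by rewrite /v /k; field; lra.
rewrite distZ_addZ; apply: Rle_trans (scale_distZ _ _ li0) _.
by rewrite Rabs_minus_sym; apply: distZ_le_half.
Qed.

Lemma torus_map_quasi_isometry :
  quasi_isometry (warped_dist m alpha t) (prod_dist m l li) (2 * (M + 2) * (1 + K)) M torus_map.
Proof.
have M0 := pos_INR m; have c0 := lower_scale_gt0.
apply: bilipschitz_quasi_isometry => [||z z'|y]; try nra; last first.
  by have [z z_close] := torus_map_dense y; exists z; lra.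
rewrite prod_dist_torus_map; have P0 := gauge_ge0 (rep z - rep z').
have [lo hi] := warped_dist_between z z' lower_metric_admissible
  (fun d => @admissible_le_gauge d z z').
move: lo hi P0; rewrite /gauge_metric; have := cdist_ge0 z z'.
set P := gauge _; set dw := warped_dist _ _ _ _ _ => ? lo hi P0.
have cP_le : lower_scale * P <= dw by lra.
have dw0 : 0 <= dw by have := Rmult_le_pos _ _ (Rlt_le _ _ c0) P0; lra.
have KM0 : 0 <= (M + 2) * (1 + K) by nra.
split; first by have := Rmult_le_pos _ _ KM0 P0; nra.
have -> : P = 2 * (M + 1) * (1 + K) * (lower_scale * P) by rewrite /lower_scale; field; lra.
apply: Rle_trans (Rmult_le_compat_l _ _ _ _ cP_le) _; first nra.
by apply: Rmult_le_compat_r => //; nra.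
Qed.

End Level.

Theorem lemmaA5 :
  forall (m : nat) (K : R), (1 <= m)%nat -> 0 < K ->
  exists C A : R, 0 < C /\
  forall (alpha : 'I_m -> R) (q : nat) (l : R)
         (p : 'I_m -> nat) (li : 'I_m -> nat),
    (forall i, 0 < alpha i < 1) ->
    (1 <= q)%nat -> 1 <= l -> INR q <= l ->
    (forall i, (1 <= p i)%nat /\ (p i <= q - 1)%nat) ->
    (forall i, Rabs (INR q * alpha i - INR (p i)) < K / l) ->
    (forall i, (0 < li i)%nat) ->
    cyclic_decomp m q li p ->
    exists f : circle -> circle * ('I_m -> circle),
      quasi_isometry (warped_dist m alpha (INR q * l)) (prod_dist m l li)
                     C A f.
Proof.
move=> m K _ K_gt0; exists (2 * (INR m + 2) * (1 + K)), (INR m).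
split=> [|alpha q l p li _ q_ge1 _ q_le_l _ alpha_close li_gt0 decomp].
  by have := pos_INR m; nra.
have [w [w_range q_w p_w w_lift]] := cyclic_decomp_weights q_ge1 li_gt0 decomp.
by eexists; apply: torus_map_quasi_isometry.
Qed.
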